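(* Let $\pi_\theta$ be a parametrized policy with $\pi_\theta(a\mid s)>0$ differentiable in $\theta$ for all $(s,a)$, and let $P_\nu$ be an encoding matrix of full row rank. Define $P_U^{\theta}=P_\nu P_{\mathcal{S}}^{\pi_\theta}P_\nu^{\dagger}$, assume the spectral radius of $\gamma P_U^{\theta}$ is less than $1$, and define the abstract value function $V_U^{\theta}=(I-\gamma P_U^{\theta})^{-1}P_\nu R_{\mathcal{S}}^{\pi_\theta}$. Let $\eta(x\mid u)=\sum_{t=0}^{\infty}\gamma^t\big((P_U^{\theta})^t\big)_{u,x}$ for $u,x\in U$ and $P_1(u'\mid s,a)=\sum_{s'\in\mathcal{S}}P_{\mathcal{S}\mathcal{A}}(s'\mid s,a)\,P_\nu^{\dagger}(s',u')$. Then for every $u\in U$, $$\nabla_\theta V_U^{\theta}(u)=\sum_{x\in U}\eta(x\mid u)\sum_{s\in\mathcal{S}}\nu(s\mid x)\sum_{a\in\mathcal{A}}\pi_\theta(a\mid s)\,\nabla_\theta\ln\pi_\theta(a\mid s)\Big[r(s,a)+\gamma\sum_{u'\in U}P_1(u'\mid s,a)\,V_U^{\theta}(u')\Big].$$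
   Context: Ground MDP with finite $\mathcal{S},\mathcal{A}$, transition probabilities $P_{\mathcal{S}\mathcal{A}}(s'\mid s,a)$, reward $r$, discount $\gamma\in(0,1)$. $P_{\mathcal{S}}^{\pi}(s,s')=\sum_a\pi(a\mid s)P_{\mathcal{S}\mathcal{A}}(s'\mid s,a)$, $R_{\mathcal{S}}^{\pi}(s)=\sum_a\pi(a\mid s)r(s,a)$. The encoding matrix $P_\nu\in\mathbb{R}^{|U|\times|\mathcal{S}|}$ has $(u,s)$ entry $\nu(s\mid u)$, each row a probability distribution on $\mathcal{S}$, $U$ a finite abstract state set. $P_\nu^{\dagger}=P_\nu^\top(P_\nu P_\nu^\top)^{-1}\in\mathbb{R}^{|\mathcal{S}|\times|U|}$, and $P_\nu^{\dagger}(s',u')$ denotes its $(s',u')$ entry. *)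

From HB Require Import structures.
From mathcomp Require Import all_boot all_order all_algebra.
From mathcomp Require Import all_classical all_reals all_analysis.
From mathcomp Require Import complex.
Set Implicit Arguments. Unset Strict Implicit. Unset Printing Implicit Defensive.
Import Order.TTheory GRing.Theory Num.Theory.
Import numFieldNormedType.Exports.
Local Open Scope ring_scope.

Section Defs.
Variable R : realType.
Variables (nS nA nU d : nat).

(* P_S^pi(s,s') = sum_a pi(a|s) P_SA(s'|s,a);  pi th s a = pi_theta(a|s),
   P s a s' = P_SA(s'|s,a). *)
Definition PS (pi : 'rV[R]_d -> 'I_nS -> 'I_nA -> R)
  (P : 'I_nS -> 'I_nA -> 'I_nS -> R) (th : 'rV[R]_d) : 'M[R]_nS :=
  \matrix_(s, s') \sum_(a < nA) pi th s a * P s a s'.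

Definition RS (pi : 'rV[R]_d -> 'I_nS -> 'I_nA -> R)
  (r : 'I_nS -> 'I_nA -> R) (th : 'rV[R]_d) : 'cV[R]_nS :=
  \col_s \sum_(a < nA) pi th s a * r s a.

(* encoding matrix: (u,s) entry nu(s|u) *)
Definition Pnu (nu : 'I_nU -> 'I_nS -> R) : 'M[R]_(nU, nS) :=
  \matrix_(u, s) nu u s.

Definition pdag (M : 'M[R]_(nU, nS)) : 'M[R]_(nS, nU) :=
  M^T *m invmx (M *m M^T).

Definition PU pi P nu th : 'M[R]_nU := Pnu nu *m PS pi P th *m pdag (Pnu nu).

Definition VU pi P r nu (gamma : R) th : 'cV[R]_nU :=
  invmx (1%:M - gamma *: PU pi P nu th) *m (Pnu nu *m RS pi r th).

Definition etaU pi P nu (gamma : R) th (x u : 'I_nU) : R :=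
  limn (fun n : nat => \sum_(0 <= t < n) gamma ^+ t * (PU pi P nu th ^+ t) u x).

Definition P1 (P : 'I_nS -> 'I_nA -> 'I_nS -> R) nu (s : 'I_nS) (a : 'I_nA)
  (u' : 'I_nU) : R :=
  \sum_(s' < nS) P s a s' * pdag (Pnu nu) s' u'.
End Defs.

Definition spectral_radius_lt1 (R : realType) (n : nat) (A : 'M[R]_n) : Prop :=
  forall lam : R[i], eigenvalue (map_mx (fun x : R => (x%:C)%C) A) lam ->
    `|lam| < 1.

From HB Require Import structures.
From mathcomp Require Import all_boot all_order all_algebra.
From mathcomp Require Import all_classical all_reals all_analysis.
From mathcomp Require Import complex.
Set Implicit Arguments. Unset Strict Implicit. Unset Printing Implicit Defensive.
Import Order.TTheory GRing.Theory Num.Theory.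
Import numFieldNormedType.Exports.
Local Open Scope ring_scope.
Local Open Scope classical_set_scope.

(* Write V_U = M^-1 b with M = I - gamma P_nu P_S P_nu^dagger and b = P_nu R_S,
   both affine in the policy probabilities.  Differentiating M V_U = b gives
   M dV_U = db - dM V_U, i.e. dV_U = M^-1 P_nu (dR_S + gamma dP_S P_nu^dagger V_U).
   Because the spectral radius of gamma P_U is below 1, M^-1 is the Neumann
   series sum_t (gamma P_U)^t, whose (u, x) entry is eta(x | u); the powers
   are absolutely summable because the characteristic polynomial splits over C
   into factors X - z with |z| < 1.  Finally d pi = pi d(ln pi) turns dR_S
   and dP_S into the score-function sums of the statement. *)

Section NormSeriesBounded.
Variable K : numFieldType.

Definition norm_series_bounded (u : nat -> K) : Prop :=
  exists B : K, forall N, \sum_(k < N) `|u k| <= B.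

Lemma norm_series_bounded_rec (u w : nat -> K) (z : K) :
  `|z| < 1 -> (forall k, u k.+1 = z * u k + w k) ->
  norm_series_bounded w -> norm_series_bounded u.
Proof.
move=> z_lt1 u_rec [Bw w_bounded].
exists ((`|u 0| + Bw) / (1 - `|z|)) => N.
rewrite ler_pdivlMr ?subr_gt0 //.
set T := \sum_(k < N) `|u k|.
have T_le : T <= `|u 0| + (`|z| * T + Bw).
  apply: le_trans (_ : \sum_(k < N.+1) `|u k| <= _).
    by rewrite big_ord_recr /= lerDl.
  rewrite big_ord_recl lerD2l /T mulr_sumr.
  apply: le_trans (_ : \sum_(k < N) (`|z| * `|u k| + `|w k|) <= _).
    by apply: ler_sum => k _; rewrite /bump /= u_rec -normrM ler_normD.
  by rewrite big_split /= lerD2l w_bounded.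
by rewrite mulrBr mulr1 lerBlDr mulrC addrAC -addrA.
Qed.

(* If N annihilates prod_z (B - z) with all |z| < 1, peeling off one factor
   B - z turns the entries of N B^k into a solution of u_(k+1) = z u_k + w_k
   with w bounded by induction. *)
Lemma norm_series_bounded_mulmx_exp m n (N : 'M[K]_(m, n.+1))
    (B : 'M[K]_n.+1) (zs : seq K) :
  (forall z, z \in zs -> `|z| < 1) -> N *m \prod_(z <- zs) (B - z%:M) = 0 ->
  forall i j, norm_series_bounded (fun k => (N *m B ^+ k) i j).
Proof.
elim: zs N => [|z zs IH] N zs_lt1.
  rewrite big_nil mulmx1 => -> i j; exists 0 => M.
  by rewrite big1 // => k _; rewrite mul0mx mxE normr0.
rewrite big_cons -mulmxE mulmxA => N_annih i j.
apply: (@norm_series_bounded_rec _ (fun k => (N *m (B - z%:M) *m B ^+ k) i j) z).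
- by apply: zs_lt1; rewrite inE eqxx.
- move=> k; rewrite mulmxBr mul_mx_scalar mulmxBl -scalemxAl.
  by rewrite -mulmxA mulmxE -exprS !mxE [RHS]addrC subrK.
- by apply: IH N_annih i j => y y_zs; apply: zs_lt1; rewrite inE y_zs orbT.
Qed.

End NormSeriesBounded.

Lemma normr_real_complex (R : rcfType) (x : R) : `|(x%:C)%C| = (`|x|%:C)%C.
Proof. by rewrite normc_def /= expr0n addr0 sqrtr_sqr. Qed.

Section SpectralRadius.
Variables (R : realType) (n : nat) (A : 'M[R]_n.+1).
Hypothesis A_lt1 : spectral_radius_lt1 A.

Lemma spectral_radius_lt1_unitmx : 1 - A \in unitmx.
Proof.
rewrite unitmxE unitfE; apply/negP => /det0P [v v_neq0].
move/eqP; rewrite mulmxBr mulmx1 subr_eq0 => /eqP vA.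
have A_eig1 : eigenvalue A 1 by apply/eigenvalueP; exists v; rewrite ?scale1r.
rewrite -(eigenvalue_map (real_complex R)) rmorph1 in A_eig1.
by have := A_lt1 A_eig1; rewrite normr1 ltxx.
Qed.

Lemma spectral_radius_lt1_exp_cvg0 i j : (A ^+ k) i j @[k --> \oo] --> 0.
Proof.
pose B := map_mx (fun x : R => (x%:C)%C) A.
have [zs B_char] := closed_field_poly_normal (char_poly B).
rewrite (monicP (char_poly_monic B)) scale1r in B_char.
have zs_lt1 z : z \in zs -> `|z| < 1.
  by move=> z_zs; apply: A_lt1; rewrite eigenvalue_root_char B_char root_prod_XsubC.
have annih : 1%:M *m \prod_(z <- zs) (B - z%:M) = 0.
  rewrite mul1mx -(Cayley_Hamilton B) B_char rmorph_prod.
  by apply: eq_bigr => z _; rewrite rmorphB /= horner_mx_X horner_mx_C.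
have [Bd sum_le] := norm_series_bounded_mulmx_exp zs_lt1 annih i j.
apply: norm_cvg0; apply: (@cvg_series_cvg_0 _ _ (fun k => `|(A ^+ k) i j|)).
apply: nondecreasing_is_cvgn; first exact: nondecreasing_series.
exists (complex.Re Bd) => _ [N _ <-]; rewrite /series /= big_mkord.
move: (sum_le N); rewrite lecE => /andP[_]; apply: le_trans.
suff -> : \sum_(k < N) `|(1%:M *m B ^+ k) i j| =
          ((\sum_(k < N) `|(A ^+ k) i j|)%:C)%C by [].
rewrite rmorph_sum; apply: eq_bigr => k _.
by rewrite mul1mx /B -rmorphXn mxE normr_real_complex.
Qed.

Lemma spectral_radius_lt1_neumann i j :
  limn (fun N => \sum_(0 <= t < N) (A ^+ t) i j) = invmx (1 - A) i j.
Proof.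
set M := invmx (1 - A).
have partial_sum N :
    \sum_(0 <= t < N) (A ^+ t) i j = M i j - \sum_k M i k * (A ^+ N) k j.
  have geom : M *m (1 - A ^+ N) = \sum_(t < N) A ^+ t.
    rewrite -[1 - A ^+ N]opprB subrX1 -mulNr opprB -mulmxE mulKmx //.
    exact: spectral_radius_lt1_unitmx.
  by rewrite big_mkord -summxE -geom mulmxBr mulmx1 !mxE.
apply: cvg_lim => //; rewrite (funext partial_sum).
rewrite -[X in _ --> X]subr0; apply: cvgB; first exact: cvg_cst.
rewrite [X in _ --> X](_ : 0 = \sum_k M i k * 0); last first.
  by rewrite big1 // => k _; rewrite mulr0.
apply: (cvg_big add_continuous) => // k _.
have := cvgM (cvg_cst (M i k)) (spectral_radius_lt1_exp_cvg0 k j).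
by rewrite mulr0; apply.
Qed.

End SpectralRadius.

Section Line.
Variables (R : numFieldType) (V W : normedModType R).

Lemma derive_line (f : V -> W) (x v : V) :
  'D_v f x = 'D_1 (fun h : R => f (h *: v + x)) 0.
Proof.
rewrite /derive; congr (lim _).
suff -> : (fun h : R => h^-1 *: ((f \o shift x) (h *: v) - f x)) =
  (fun h : R => h^-1 *: (((fun k : R => f (k *: v + x)) \o shift 0) h%:A
     - f (0 *: v + x))) by [].
by apply/funext => h /=; rewrite scale0r add0r addr0 [_%:A]mulr1.
Qed.

Lemma is_derive_lineP (f : V -> W) (x v : V) (df : W) :
  is_derive x v f df <-> is_derive (0 : R) 1 (fun h : R => f (h *: v + x)) df.
Proof.
split=> -[f_der f_val]; split.
- exact: (iffLR (derivable1P f x v) f_der).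
- by rewrite -derive_line.
- exact: (iffRL (derivable1P f x v) f_der).
- by rewrite derive_line.
Qed.

End Line.

Lemma is_derive_ln (R : realType) (V : normedModType R) (f : V -> R)
    (x v : V) (df : R) :
  0 < f x -> is_derive x v f df ->
  is_derive x v (fun t => ln (f t)) ((f x)^-1 * df).
Proof.
move=> fx_gt0 /is_derive_lineP f_der; apply/is_derive_lineP.
have ln_der : is_derive (f (0 *: v + x)) 1 (@ln R) (f x)^-1.
  by rewrite scale0r add0r; exact: is_derive1_ln.
exact: is_derive1_comp ln_der f_der.
Qed.

Section MatrixDerivative.
Variables (R : realType) (x : R).

Lemma is_derive_sum_fun (I : Type) (r : seq I) (F : I -> R -> R) (dF : I -> R) :
  (forall k, is_derive x 1 (F k) (dF k)) ->
  is_derive x 1 (fun h => \sum_(k <- r) F k h) (\sum_(k <- r) dF k).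
Proof.
move=> F_der; elim: r => [|k r IH].
  by under eq_fun do rewrite big_nil; rewrite big_nil; exact: is_derive_cst.
under eq_fun do rewrite big_cons; rewrite big_cons.
exact: is_deriveD.
Qed.

Lemma derivable_sum_fun (I : Type) (r : seq I) (F : I -> R -> R) :
  (forall k, derivable (F k) x 1) ->
  derivable (fun h => \sum_(k <- r) F k h) x 1.
Proof.
by move=> F_der; have [] := is_derive_sum_fun r (fun k => derivableP (F_der k)).
Qed.

Lemma derivable_prod_fun (I : Type) (r : seq I) (F : I -> R -> R) :
  (forall k, derivable (F k) x 1) ->
  derivable (fun h => \prod_(k <- r) F k h) x 1.
Proof.
move=> F_der; elim: r => [|k r IH].
  by under eq_fun do rewrite big_nil; exact: derivable_cst.
under eq_fun do rewrite big_cons.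
exact: derivableM.
Qed.

Definition is_derive_mx m n (X : R -> 'M[R]_(m, n)) (dX : 'M[R]_(m, n)) :=
  forall i j, is_derive x 1 (fun h => X h i j) (dX i j).

Lemma is_derive_mx_cst m n (C : 'M[R]_(m, n)) : is_derive_mx (fun=> C) 0.
Proof. by move=> i j; rewrite mxE; exact: is_derive_cst. Qed.


Section Rules.
Variables (m n p : nat) (X : R -> 'M[R]_(m, n)) (dX : 'M[R]_(m, n)).
Hypothesis X_der : is_derive_mx X dX.

Lemma is_derive_mxB (Y : R -> 'M[R]_(m, n)) (dY : 'M[R]_(m, n)) :
  is_derive_mx Y dY -> is_derive_mx (fun h => X h - Y h) (dX - dY).
Proof.
move=> Y_der i j; under eq_fun do rewrite !mxE; rewrite !mxE.
exact: is_deriveB.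
Qed.

Lemma is_derive_mxZ (c : R) : is_derive_mx (fun h => c *: X h) (c *: dX).
Proof.
move=> i j; under eq_fun do rewrite mxE; rewrite mxE.
exact: is_deriveZ.
Qed.

Lemma is_derive_mxM (Y : R -> 'M[R]_(n, p)) (dY : 'M[R]_(n, p)) :
  is_derive_mx Y dY ->
  is_derive_mx (fun h => X h *m Y h) (dX *m Y x + X x *m dY).
Proof.
move=> Y_der i j; under eq_fun do rewrite mxE.
rewrite !mxE -big_split /=; apply: is_derive_sum_fun => k.
apply: is_derive_eq (is_deriveM (X_der i k) (Y_der k j)) _.
by rewrite addrC [dX _ _ * _]mulrC.
Qed.

End Rules.

Lemma derivable_det n (M : R -> 'M[R]_n) :
  (forall i j, derivable (fun h => M h i j) x 1) ->
  derivable (fun h => \det (M h)) x 1.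
Proof.
move=> M_der; apply: derivable_sum_fun => s.
by apply: derivableM; [exact: derivable_cst | exact: derivable_prod_fun].
Qed.

Lemma near_unitmx n (M : R -> 'M[R]_n) :
  (forall i j, derivable (fun h => M h i j) x 1) -> M x \in unitmx ->
  \forall h \near x, M h \in unitmx.
Proof.
rewrite unitmxE unitfE => M_der det_neq0.
have det_cont : {for x, continuous (fun h => \det (M h))}.
  exact/differentiable_continuous/derivable1_diffP/derivable_det.
have det_near := @cvgr_neq0 _ _ _ _ _ (fun h => \det (M h)) _ det_cont det_neq0.
near=> h; rewrite unitmxE unitfE; exact: (near (det_near (nbhs_filter x)) h).
Unshelve. all: by end_near.
Qed.

Lemma derivable_invmx n (M : R -> 'M[R]_n) :
  (forall i j, derivable (fun h => M h i j) x 1) -> M x \in unitmx ->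
  forall i j, derivable (fun h => invmx (M h) i j) x 1.
Proof.
move=> M_der M_unit i j.
have minor_der a b : derivable (fun h => row' j (col' i (M h)) a b) x 1.
  by under eq_fun do rewrite !mxE; exact: M_der.
apply: (@near_eq_derivable _ _ _
  (fun h => (\det (M h))^-1 * ((-1) ^+ (j + i) * \det (row' j (col' i (M h)))))).
  near=> h; have Mh_unit : M h \in unitmx by near: h; exact: near_unitmx.
  by rewrite /invmx Mh_unit mxE /adjugate mxE /cofactor.
apply: derivableM.
  by apply: derivableV (derivable_det M_der); rewrite -unitfE -unitmxE.
by apply: derivableM; [exact: derivable_cst | exact: derivable_det].
Unshelve. all: by end_near.
Qed.


Lemma is_derive_mx_invmx_mul n p (M : R -> 'M[R]_n) (b : R -> 'M[R]_(n, p))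
    (dM : 'M[R]_n) (db : 'M[R]_(n, p)) :
  is_derive_mx M dM -> is_derive_mx b db -> M x \in unitmx ->
  is_derive_mx (fun h => invmx (M h) *m b h)
    (invmx (M x) *m (db - dM *m (invmx (M x) *m b x))).
Proof.
move=> M_der b_der M_unit.
have M_derivable i j : derivable (fun h => M h i j) x 1 by case: (M_der i j).
pose V h := invmx (M h) *m b h.
pose dV := \matrix_(i, j) 'D_1 (fun h => V h i j) x.
have V_der : is_derive_mx V dV.
  move=> i j; rewrite mxE; apply: derivableP.
  under eq_fun do rewrite mxE.
  apply: derivable_sum_fun => k; apply: derivableM.
    exact: derivable_invmx.
  by case: (b_der k j).
have MV_eq_b : \forall h \near x, M h *m V h = b h.
  near=> h; have Mh_unit : M h \in unitmx by near: h; exact: near_unitmx.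
  by rewrite /V mulKVmx.
have D_eq : dM *m V x + M x *m dV = db.
  apply/matrixP => i j.
  have [_ <-] := is_derive_mxM M_der V_der i j; have [_ <-] := b_der i j.
  by apply: near_eq_derive; near=> h; rewrite (near MV_eq_b h).
suff -> : invmx (M x) *m (db - dM *m (invmx (M x) *m b x)) = dV by [].
by rewrite -D_eq addrC addKr mulKmx.
Unshelve. all: by end_near.
Qed.

End MatrixDerivative.

Section AbstractValueGradient.
Variables (R : realType) (nS nA n d : nat).
Variables (P : 'I_nS -> 'I_nA -> 'I_nS -> R) (r : 'I_nS -> 'I_nA -> R)
  (gamma : R) (nu : 'I_n.+1 -> 'I_nS -> R)
  (pi : 'rV[R]_d -> 'I_nS -> 'I_nA -> R) (th e : 'rV[R]_d).
Hypothesis pi_gt0 : forall s a, 0 < pi th s a.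
Hypothesis pi_der : forall s a, derivable (fun t => pi t s a) th e.
Hypothesis PU_lt1 : spectral_radius_lt1 (gamma *: PU pi P nu th).

Local Notation Dpi s a := ('D_e (fun t => pi t s a) th).
Local Notation line h := (h *: e + th).

Let dPS : 'M[R]_nS := \matrix_(s, s') \sum_a Dpi s a * P s a s'.
Let dRS : 'cV[R]_nS := \col_s \sum_a Dpi s a * r s a.

Lemma is_derive_policy_average (c : 'I_nA -> R) s :
  is_derive (0 : R) 1 (fun h => \sum_a pi (line h) s a * c a)
    (\sum_a Dpi s a * c a).
Proof.
apply: is_derive_sum_fun => a.
have /is_derive_lineP pi_line := derivableP (@pi_der s a).
apply: is_derive_eq (is_deriveM pi_line (is_derive_cst (c a) _ _)) _.
by rewrite scaler0 add0r mulrC.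
Qed.

Lemma is_derive_PS : is_derive_mx 0 (fun h => PS pi P (line h)) dPS.
Proof.
move=> s s'; under eq_fun do rewrite mxE; rewrite mxE.
exact: is_derive_policy_average.
Qed.

Lemma is_derive_RS : is_derive_mx 0 (fun h => RS pi r (line h)) dRS.
Proof.
move=> s i; under eq_fun do rewrite mxE; rewrite mxE.
exact: is_derive_policy_average.
Qed.


Let V := VU pi P r nu gamma th.

Lemma is_derive_VU :
  is_derive_mx 0 (fun h => VU pi P r nu gamma (line h))
    (invmx (1%:M - gamma *: PU pi P nu th) *m
       (Pnu nu *m (dRS + gamma *: (dPS *m (pdag (Pnu nu) *m V))))).
Proof.
have M_der : is_derive_mx 0 (fun h => 1%:M - gamma *: PU pi P nu (line h))
    (- gamma *: (Pnu nu *m dPS *m pdag (Pnu nu))).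
  have := is_derive_mxB (is_derive_mx_cst 0 1%:M) (is_derive_mxZ
    (is_derive_mxM (is_derive_mxM (is_derive_mx_cst 0 (Pnu nu)) is_derive_PS)
                   (is_derive_mx_cst 0 (pdag (Pnu nu)))) gamma).
  by rewrite !(mul0mx, mulmx0, add0r, addr0) scaleNr.
have b_der : is_derive_mx 0 (fun h => Pnu nu *m RS pi r (line h)) (Pnu nu *m dRS).
  by have := is_derive_mxM (is_derive_mx_cst 0 (Pnu nu)) is_derive_RS; rewrite mul0mx add0r.
have M0_unit : 1%:M - gamma *: PU pi P nu (line 0) \in unitmx.
  by rewrite scale0r add0r; exact: spectral_radius_lt1_unitmx.
have VU_der := is_derive_mx_invmx_mul M_der b_der M0_unit.
rewrite scale0r add0r in VU_der.
suff -> : Pnu nu *m (dRS + gamma *: (dPS *m (pdag (Pnu nu) *m V))) =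
    Pnu nu *m dRS - (- gamma *: (Pnu nu *m dPS *m pdag (Pnu nu))) *m V by [].
by rewrite scaleNr mulNmx opprK mulmxDr -scalemxAl -scalemxAr !mulmxA.
Qed.

Lemma etaU_invmx x u :
  etaU pi P nu gamma th x u = invmx (1%:M - gamma *: PU pi P nu th) u x.
Proof.
rewrite /etaU -(spectral_radius_lt1_neumann PU_lt1); congr (limn _).
by apply/funext => N; apply: eq_bigr => t _; rewrite exprZn mxE.
Qed.

Lemma score_mul s a : pi th s a * 'D_e (fun t => ln (pi t s a)) th = Dpi s a.
Proof.
have [_ ->] := is_derive_ln (@pi_gt0 s a) (derivableP (@pi_der s a)).
by rewrite mulVKf // gt_eqF.
Qed.

Lemma score_average (W : 'cV[R]_n.+1) s :
  \sum_a pi th s a * 'D_e (fun t => ln (pi t s a)) th *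
    (r s a + gamma * \sum_u' P1 P nu s a u' * W u' 0) =
  (dRS + gamma *: (dPS *m (pdag (Pnu nu) *m W))) s 0.
Proof.
under eq_bigr => a _ do rewrite score_mul mulrDr.
rewrite big_split /= !mxE; congr (_ + _).
have P1_W a : \sum_u' P1 P nu s a u' * W u' 0 =
    \sum_s' P s a s' * (pdag (Pnu nu) *m W) s' 0.
  rewrite /P1; under eq_bigr do rewrite big_distrl /=.
  rewrite exchange_big /=; apply: eq_bigr => s' _.
  by rewrite mxE mulr_sumr; apply: eq_bigr => u' _; rewrite mulrA.
under eq_bigr do rewrite P1_W mulrCA mulr_sumr.
rewrite -mulr_sumr exchange_big; congr (_ * _); apply: eq_bigr => s' _.
set PW := (pdag (Pnu nu) *m W) s' 0.
by rewrite /dPS mxE big_distrl; apply: eq_bigr => a _; rewrite mulrA.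
Qed.

Lemma is_derive_VU_entry u :
  is_derive th e (fun t => VU pi P r nu gamma t u 0)
    (\sum_x etaU pi P nu gamma th x u *
       \sum_s nu x s *
         \sum_a pi th s a * 'D_e (fun t => ln (pi t s a)) th *
           (r s a + gamma * \sum_u' P1 P nu s a u' * V u' 0)).
Proof.
apply/is_derive_lineP; apply: is_derive_eq (is_derive_VU u 0) _.
rewrite mxE; apply: eq_bigr => x _; rewrite etaU_invmx; congr (_ * _).
by rewrite mxE; apply: eq_bigr => s _; rewrite score_average mxE.
Qed.

End AbstractValueGradient.

Theorem theorem4 (R : realType) (nS nA nU d : nat)
  (P : 'I_nS -> 'I_nA -> 'I_nS -> R) (r : 'I_nS -> 'I_nA -> R)
  (gamma : R) (nu : 'I_nU -> 'I_nS -> R)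
  (pi : 'rV[R]_d -> 'I_nS -> 'I_nA -> R) (th : 'rV[R]_d) :
  (* ground MDP *)
  (forall s a s', 0 <= P s a s') ->
  (forall s a, \sum_(s' < nS) P s a s' = 1) ->
  0 < gamma < 1 ->
  (* encoding: each row a probability distribution, full row rank *)
  (forall u s, 0 <= nu u s) ->
  (forall u, \sum_(s < nS) nu u s = 1) ->
  row_free (Pnu nu) ->
  (* parametrized policy: positive, a distribution, differentiable in theta *)
  (forall th' s a, 0 < pi th' s a) ->
  (forall th' s, \sum_(a < nA) pi th' s a = 1) ->
  (forall th' s a, differentiable (fun t : 'rV[R]_d => pi t s a) th') ->
  (* spectral radius of gamma P_U^theta < 1 *)
  spectral_radius_lt1 (gamma *: PU pi P nu th) ->
  forall (u : 'I_nU) (i : 'I_d),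
    let e := delta_mx 0 i : 'rV[R]_d in
    derivable (fun t => VU pi P r nu gamma t u 0) th e /\
    ('D_e (fun t => VU pi P r nu gamma t u 0) th) =
      \sum_(x < nU) etaU pi P nu gamma th x u *
        \sum_(s < nS) nu x s *
          \sum_(a < nA) pi th s a * ('D_e (fun t => ln (pi t s a)) th) *
            (r s a + gamma * \sum_(u' < nU) P1 P nu s a u' *
                                 VU pi P r nu gamma th u' 0).
Proof.
(* The stochasticity, rank and discount hypotheses only make the objects
   meaningful; the computation needs positivity, differentiability and the
   spectral bound alone. *)
move=> _ _ _ _ _ _ pi_gt0 _ pi_diff PU_lt1 u i e.
case: nU nu PU_lt1 u => [|n] nu PU_lt1 u; first by case: u.
have pi_der s a : derivable (fun t => pi t s a) th e.
  exact: diff_derivable.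
by have [] := is_derive_VU_entry r (pi_gt0 th) pi_der PU_lt1 u.
Qed.
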